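(* Let $U$ be a Hilbert space, $T: U\rightrightarrows U$, $(\hat u,\hat w)\in\operatorname{graph}T$, $N,M\in\mathcal{L}(U;U)$ with $M\ge0$, and $\gamma\in[0,1]$. Then $(N,\gamma M)$-strong submonotonicity of $T$ at $(\hat u,\hat w)$ implies $(\gamma M, N, M)$-partial strong submonotonicity at the same point. If $T^{-1}(\hat w)=\{\hat u\}$ is a singleton, these two properties are equivalent.
   Context: For $T\in\mathcal{L}(U;U)$: $\langle x,z\rangle_T:=\langle Tx,z\rangle$, $\|x\|^2_T:=\langle Tx,x\rangle$, $\operatorname{dist}^2_T(z,A):=\inf_{u\in A}\|z-u\|^2_T$. For $\Xi,N,M\in\mathcal{L}(U;U)$ with $M\ge0$, $T$ is $(\Xi,N,M)$-partially strongly submonotone at $(\hat u,\hat w)$ if there is a neighbourhood $\mathcal{U}\ni\hat u$ with $\inf_{u^*\in T^{-1}(\hat w)}(\langle w-\hat w,u-u^*\rangle_N + \|u-u^*\|^2_{M-\Xi}) \ge \operatorname{dist}^2_M(u,T^{-1}(\hat w))$ for all $u\in\mathcal{U}$, $w\in T(u)$. $T$ is $(N,M)$-strongly submonotone if it is $(M,N,M)$-partially strongly submonotone. *)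

From HB Require Import structures.
From mathcomp Require Import all_boot all_order all_algebra.
From mathcomp Require Import all_classical all_reals all_analysis.
Set Implicit Arguments. Unset Strict Implicit. Unset Printing Implicit Defensive.
Import Order.TTheory GRing.Theory Num.Theory.
Import numFieldNormedType.Exports.
Local Open Scope classical_set_scope.
Local Open Scope ring_scope.

(* A real Hilbert space: a complete normed space U whose norm is induced by
   the inner product ip (symmetric, linear in the first argument). *)
Definition is_inner_product (R : realType) (U : completeNormedModType R)
  (ip : U -> U -> R) : Prop :=
  [/\ forall x y, ip x y = ip y x,
      forall (a : R) x y z, ip (a *: x + y) z = a * ip x z + ip y z &
      forall x, ip x x = `|x| ^+ 2].

Definition bounded_linear (R : realType) (U : completeNormedModType R)
  (A : U -> U) : Prop := linear A /\ continuous A.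

Section Defs.
Context (R : realType) (U : completeNormedModType R) (ip : U -> U -> R).

Definition ipT (T : U -> U) (x z : U) : R := ip (T x) z.
Definition sqnormT (T : U -> U) (x : U) : R := ip (T x) x.
Definition sqdistT (T : U -> U) (z : U) (A : set U) : \bar R :=
  ereal_inf [set (sqnormT T (z - u))%:E | u in A].
Definition psd_op (M : U -> U) : Prop := forall x, 0 <= sqnormT M x.
Definition inv_img (T : U -> set U) (w : U) : set U := [set u | T u w].

Definition partially_strongly_submonotone (T : U -> set U)
  (Xi N M : U -> U) (uh wh : U) : Prop :=
  \forall u \near uh, forall w, T u w ->
    (ereal_inf [set (ipT N (w - wh) (u - us)
                     + sqnormT (fun x => M x - Xi x) (u - us))%:E
               | us in inv_img T wh]
     >= sqdistT M u (inv_img T wh))%E.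

Definition strongly_submonotone (T : U -> set U) (N M : U -> U) (uh wh : U)
  : Prop := partially_strongly_submonotone T M N M uh wh.
End Defs.

From HB Require Import structures.
From mathcomp Require Import all_boot all_order all_algebra.
From mathcomp Require Import all_classical all_reals all_analysis.
From mathcomp Require Import lra.
Import Order.TTheory GRing.Theory Num.Theory.
Import numFieldNormedType.Exports.
Local Open Scope classical_set_scope.
Local Open Scope ring_scope.

(* (N, gamma M)-strong submonotonicity is (gamma M, N, gamma M)-partial
   submonotonicity, whose inequality reads
   [inf_s <N(w - wh), u - s> >= gamma inf_s ||u - s||^2_M], while the partial
   one in the conclusion reads
   [inf_s (<N(w - wh), u - s> + (1 - gamma) ||u - s||^2_M) >= inf_s ||u - s||^2_M].
   Writing [b] for the right-hand infimum, each term of the latter is at least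
   [gamma b + (1 - gamma) b = b].  Over a singleton [T^-1(wh)] both infima are
   single values, and the two inequalities differ only by adding
   [(1 - gamma) ||u - uh||^2_M] to both sides. *)

Lemma le_ereal_inf_convex (R : realType) (I : Type) (S : set I)
    (a c : I -> R) (g : R) : 0 <= g -> g <= 1 ->
  (ereal_inf [set (g * c s)%:E | s in S] <= ereal_inf [set (a s)%:E | s in S])%E ->
  (ereal_inf [set (c s)%:E | s in S]
     <= ereal_inf [set (a s + (c s - g * c s))%:E | s in S])%E.
Proof.
move=> g0 g1 inf_gc_le_inf_a.
have inf_c_le s : S s -> (ereal_inf [set (c s)%:E | s in S] <= (c s)%:E)%E.
  by move=> Ss; apply: ereal_inf_lbound; exists s.
apply: le_ereal_inf_tmp => _ [s Ss <-].
move: (inf_c_le s Ss).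
case: (ereal_inf _) inf_c_le => [b | // | _ _]; last exact: leNye.
move=> b_le_c; rewrite !lee_fin => b_le_cs.
have gb_le_as : g * b <= a s.
  rewrite -lee_fin; apply: le_trans (le_trans inf_gc_le_inf_a _).
    apply: le_ereal_inf_tmp => _ [t St <-].
    by rewrite lee_fin ler_wpM2l // -lee_fin b_le_c.
  by apply: ereal_inf_lbound; exists s.
have onemg_ge0 : 0 <= 1 - g by rewrite subr_ge0.
have := ler_wpM2l onemg_ge0 b_le_cs.
nra.
Qed.

Section InnerProductLinearLeft.
Context {R : realType} {U : completeNormedModType R} {ip : U -> U -> R}.
Hypothesis ipDl : forall (a : R) x y z, ip (a *: x + y) z = a * ip x z + ip y z.

Lemma ip0l z : ip 0 z = 0.
Proof. by have := ipDl 1 0 0 z; rewrite scale1r addr0 mul1r => h; lra. Qed.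

Lemma ipZl a x z : ip (a *: x) z = a * ip x z.
Proof. by rewrite -[a *: x]addr0 ipDl ip0l addr0. Qed.

Lemma ipBl x y z : ip (x - y) z = ip x z - ip y z.
Proof.
by have := ipDl 1 x (- y) z; rewrite scale1r mul1r -[- y]scaleN1r ipZl mulN1r.
Qed.

Definition submonotone_ineq (T : U -> set U) (Xi N M : U -> U) (wh u w : U)
    : Prop :=
  (ereal_inf [set (ipT ip N (w - wh) (u - us)
                   + sqnormT ip (fun x => M x - Xi x) (u - us))%:E
             | us in inv_img T wh]
   >= sqdistT ip M u (inv_img T wh))%E.

Lemma partially_strongly_submonotoneS (T : U -> set U)
    (Xi N M Xi' N' M' : U -> U) (uh wh : U) :
  (forall u w, T u w -> submonotone_ineq T Xi N M wh u w ->
                        submonotone_ineq T Xi' N' M' wh u w) ->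
  partially_strongly_submonotone ip T Xi N M uh wh ->
  partially_strongly_submonotone ip T Xi' N' M' uh wh.
Proof. by move=> impl; apply: filterS => u Hu w Tuw; apply/impl/Hu. Qed.

Context {T : U -> set U} {N M : U -> U} {wh : U} {gamma : R}.

Let a u w s := ipT ip N (w - wh) (u - s).
Let c u s := sqnormT ip M (u - s).

Lemma submonotone_ineq_strong_scale u w :
  submonotone_ineq T (fun x => gamma *: M x) N (fun x => gamma *: M x) wh u w
  <-> (ereal_inf [set (gamma * c u s)%:E | s in inv_img T wh]
        <= ereal_inf [set (a u w s)%:E | s in inv_img T wh])%E.
Proof.
rewrite /submonotone_ineq /sqdistT /sqnormT.
under [X in (_ <= ereal_inf X)%E <-> _]eq_imagel => s _ do rewrite ipBl subrr addr0.
by under [X in (ereal_inf X <= _)%E <-> _]eq_imagel => s _ do rewrite ipZl.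
Qed.

Lemma submonotone_ineq_partial_scale u w :
  submonotone_ineq T (fun x => gamma *: M x) N M wh u w
  <-> (ereal_inf [set (c u s)%:E | s in inv_img T wh]
        <= ereal_inf [set (a u w s + (c u s - gamma * c u s))%:E
                     | s in inv_img T wh])%E.
Proof.
rewrite /submonotone_ineq /sqdistT /sqnormT.
by under [X in (_ <= ereal_inf X)%E <-> _]eq_imagel => s _ do rewrite ipBl ipZl.
Qed.

Lemma submonotone_ineq_strong_partial : 0 <= gamma -> gamma <= 1 -> forall u w,
  submonotone_ineq T (fun x => gamma *: M x) N (fun x => gamma *: M x) wh u w ->
  submonotone_ineq T (fun x => gamma *: M x) N M wh u w.
Proof.
move=> g0 g1 u w; rewrite submonotone_ineq_strong_scale submonotone_ineq_partial_scale.
exact: le_ereal_inf_convex.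
Qed.

Lemma submonotone_ineq_partial_strong_singleton {uh} :
  inv_img T wh = [set uh] -> forall u w,
  submonotone_ineq T (fun x => gamma *: M x) N M wh u w ->
  submonotone_ineq T (fun x => gamma *: M x) N (fun x => gamma *: M x) wh u w.
Proof.
move=> single u w; rewrite submonotone_ineq_strong_scale submonotone_ineq_partial_scale.
by rewrite single !image_set1 !ereal_inf1 !lee_fin; lra.
Qed.

End InnerProductLinearLeft.

Theorem corollary4p4 (R : realType) (U : completeNormedModType R)
  (ip : U -> U -> R) (Hip : is_inner_product ip)
  (T : U -> set U) (uh wh : U) (Hgraph : T uh wh)
  (N M : U -> U) (HN : bounded_linear N) (HM : bounded_linear M)
  (HM0 : psd_op ip M) (gamma : R) (Hg0 : 0 <= gamma) (Hg1 : gamma <= 1) :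
  (strongly_submonotone ip T N (fun x => gamma *: M x) uh wh ->
   partially_strongly_submonotone ip T (fun x => gamma *: M x) N M uh wh)
  /\
  (inv_img T wh = [set uh] ->
   (strongly_submonotone ip T N (fun x => gamma *: M x) uh wh <->
    partially_strongly_submonotone ip T (fun x => gamma *: M x) N M uh wh)).
Proof.
case: Hip => _ ipDl _.
split=> [|single]; last split; last first.
  apply: partially_strongly_submonotoneS => u w _.
  exact: (submonotone_ineq_partial_strong_singleton ipDl single u w).
all: apply: partially_strongly_submonotoneS => u w _.
all: exact: (submonotone_ineq_strong_partial ipDl Hg0 Hg1 u w).
Qed.
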